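(* Let $S\subset[0,\infty)$ with $0\in S$, let $C>0$, and let $f\colon S\to[0,\infty)$ be a right-continuous decreasing function with $DP(\overline{f})\subset S$. If $f$ vanishes at infinity, then there exists a sequence $\{F_n\}_{n=0}^\infty$ of finite subsets of $S$ such that $0\in F_n$, $F_n\subset F_{n+1}$, and $\|g^f_{F_n}-f\|<C/2^n$ for all $n\in\mathbb{N}$, where $\|\cdot\|$ is the supremum norm over $S$.
   Context: For $S\subset[0,\infty)$ with $0\in S$, a function on $S$ is right-continuous if it is right-continuous for the relative topology of $S$. For a right-continuous decreasing $f\colon S\to[0,\infty)$ and $x\in\overline{S}$ (closure in $\mathbb{R}$), set $f(x+):=\sup\{f(y)\mid y\in(x,\infty)\cap S\}$ whenever $(x,\infty)\cap S\neq\emptyset$, and $f(x-):=\inf\{f(y)\mid y\in[0,x)\cap S\}$ if $x\neq0$, $f(0-):=f(0)$. Define $\overline{f}\colon\overline{S}\to[0,\infty)$ by $\overline{f}(x)=f(x)$ if $x\in S$, $\overline{f}(x)=f(x+)$ if $x\in\overline{S}\setminus S$ is a right accumulation point of $S$, and $\overline{f}(x)=f(x-)$ otherwise; with $\overline{f}(x-)$ defined by the same formula applied to $\overline{f}$ on $\overline{S}$, let $DP(\overline{f}):=\{x\in\overline{S}\setminus\{0\}\mid\overline{f}(x-)>\overline{f}(x)\}$. $f$ vanishes at infinity if for every $\varepsilon>0$ there is $x\in S$ with $f(y)<\varepsilon$ for all $y\in S$, $y\geq x$. For a finite $F=\{0=x_0<x_1<\cdots<x_m\}\subset S$ and decreasing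 $f$, the step function $g^f_F\colon S\to[0,\infty)$ is $g^f_F:=\sum_{i=1}^m f(x_{i-1})\chi_{[x_{i-1},x_i)\cap S}$, which is $0$ on $[x_m,\infty)\cap S$. *)

From HB Require Import structures.
From mathcomp Require Import all_boot all_order all_algebra.
From mathcomp Require Import all_classical all_reals.
Set Implicit Arguments. Unset Strict Implicit. Unset Printing Implicit Defensive.
Import Order.TTheory GRing.Theory Num.Theory.
Local Open Scope classical_set_scope.
Local Open Scope ring_scope.

Section Defs.
Variable R : realType.
Implicit Types (S : set R) (f : R -> R).

Definition closureR S : set R :=
  [set x | forall e : R, 0 < e -> exists2 y, S y & `|x - y| < e].

Definition right_cont S f : Prop :=
  forall x, S x -> forall e : R, 0 < e -> exists2 d : R, 0 < d &
    forall y, S y -> x <= y -> y < x + d -> `|f y - f x| < e.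

Definition decr_on S f : Prop :=
  forall x y, S x -> S y -> x <= y -> f y <= f x.

Definition fplus S f (x : R) : R := sup [set f y | y in [set y | S y /\ x < y]].

Definition fminus S f (x : R) : R :=
  if `[< x = 0 >] then f 0 else inf [set f y | y in [set y | S y /\ 0 <= y /\ y < x]].

Definition right_acc S (x : R) : Prop :=
  forall e : R, 0 < e -> exists2 y, S y & x < y < x + e.

Definition fbar S f (x : R) : R :=
  if `[< S x >] then f x
  else if `[< right_acc S x >] then fplus S f x
  else fminus S f x.

Definition DP S f : set R :=
  [set x | closureR S x /\ x <> 0 /\
           fbar S f x < fminus (closureR S) (fbar S f) x].

Definition vanishes_at_infty S f : Prop :=
  forall e : R, 0 < e -> exists2 x, S x &
    forall y, S y -> x <= y -> f y < e.

(* step function g^f_F, F given by its strictly increasing enumeration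
   [:: x_0 = 0; x_1; ...; x_m] *)
Definition stepfun S f (F : seq R) (y : R) : R :=
  \sum_(1 <= i < size F)
     (if `[< S y /\ nth 0 F i.-1 <= y < nth 0 F i >] then f (nth 0 F i.-1) else 0).

Definition supnormS S (g : R -> R) : R := sup [set `|g x| | x in S].

End Defs.

From HB Require Import structures.
From mathcomp Require Import all_boot all_order all_algebra.
From mathcomp Require Import all_classical all_reals.
From mathcomp Require Import lra.
Set Implicit Arguments. Unset Strict Implicit. Unset Printing Implicit Defensive.
Import Order.TTheory GRing.Theory Num.Theory.
Local Open Scope classical_set_scope.
Local Open Scope ring_scope.

(* Fix eps > 0 and walk right from 0.  At x with f x > eps let s be the
   infimum of the points of S where f < f x - eps/2.  If s is in S, right
   continuity makes f drop by eps/2 at s.  Otherwise s is a right accumulation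
   point of S outside DP(fbar), so f(s+) >= fbar(s-) >= f x - eps/2 and some
   p > s of S has f p close to f(s+).  Either way f drops by eps/2 at the next
   point while varying by at most eps before it, so f <= eps is reached after
   finitely many steps and the visited points form a partition on which the
   step function is eps-close to f.  Taking eps = C/2^(n+1) and merging the
   partitions for 0, ..., n gives the nested sequence, since adding points
   keeps the approximation. *)

Definition sorted_union d (T : orderType d) (G : nat -> seq T) n :=
  sort <=%O (undup (flatten [seq G k | k <- iota 0 n.+1])).

Lemma sorted_unionP d (T : orderType d) (G : nat -> seq T) n x :
  reflect (exists2 k, (k <= n)%N & x \in G k) (x \in sorted_union G n).
Proof.
rewrite mem_sort mem_undup; apply: (iffP flatten_mapP) => -[k].
  by rewrite mem_iota ltnS => kn xG; exists k.
by move=> kn xG; exists k; rewrite // mem_iota ltnS.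
Qed.

Lemma sorted_union_sorted d (T : orderType d) (G : nat -> seq T) n :
  sorted <%O (sorted_union G n).
Proof. by rewrite lt_sorted_uniq_le sort_uniq undup_uniq sort_sorted //; apply: le_total. Qed.

Section Approximation.
Variables (R : realType) (S : set R) (f : R -> R).
Hypotheses (S_ge0 : forall x, S x -> 0 <= x) (S0 : S 0).
Hypotheses (f_ge0 : forall x, S x -> 0 <= f x) (f_rc : right_cont S f).
Hypotheses (f_decr : decr_on S f) (DP_sub : DP S f `<=` S).
Hypothesis f_vanish : vanishes_at_infty S f.

Lemma stepfun_nth F y i : sorted <%R F -> S y -> (0 < i < size F)%N ->
  nth 0 F i.-1 <= y < nth 0 F i -> stepfun S f F y = f (nth 0 F i.-1).
Proof.
move=> sF Sy /andP[i0 iF] yi.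
have le_nth k l : (k < size F)%N -> (l < size F)%N -> (k <= l)%N ->
    nth 0 F k <= nth 0 F l.
  move: sF; rewrite lt_sorted_uniq_le => /andP[_ sF] kF lF.
  exact: (sorted_leq_nth le_trans lexx 0 sF).
rewrite /stepfun (bigD1_seq i) ?iota_uniq ?mem_index_iota ?i0 //=.
rewrite asboolT // big1_seq ?addr0 // => j /andP[ji].
rewrite mem_index_iota => /andP[j0 jF]; rewrite asboolF // => -[_ /andP[yj jy]].
case/andP: yi => iy yi; case: (ltngtP j i) ji => // [lt_ji|lt_ij] _.
- have := le_nth j i.-1 jF (leq_ltn_trans (leq_pred i) iF).
  by rewrite -ltnS prednK // => /(_ lt_ji) ji1; have := le_trans ji1 iy; lra.
- have := le_nth i j.-1 iF (leq_ltn_trans (leq_pred j) jF).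
  by rewrite -ltnS prednK // => /(_ lt_ij) ij1; have := le_trans ij1 yj; lra.
Qed.

Lemma stepfun_ge_all F y : (forall b, b \in F -> b <= y) -> stepfun S f F y = 0.
Proof.
move=> Fy; rewrite /stepfun big1_seq // => i /andP[_].
rewrite mem_index_iota => /andP[_ iF]; rewrite asboolF // => -[_ /andP[_]].
by rewrite ltNge Fy ?mem_nth.
Qed.

Lemma stepfun_floor F y a0 : sorted <%R F -> S y -> a0 \in F -> a0 <= y ->
    has (fun b => y < b) F ->
  exists2 a, a \in F & [/\ a <= y, (forall b, b \in F -> b <= y -> b <= a)
                       & stepfun S f F y = f a].
Proof.
move=> sF Sy a0F a0y hasF; set i := find (fun b => y < b) F.
have sFle : sorted <=%R F by move: sF; rewrite lt_sorted_uniq_le => /andP[].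
have iF : (i < size F)%N by rewrite -has_find.
have yi : y < nth 0 F i by apply: nth_find.
have before b : b \in F -> b <= y -> (index b F < i)%N.
  move=> bF b_le_y; rewrite ltnNge; apply/negP => ib.
  have := sorted_leq_nth le_trans lexx 0 sFle _ _ iF _ ib.
  by rewrite inE index_mem nth_index // => /(_ bF); lra.
have i0 : (0 < i)%N by apply: leq_ltn_trans (before a0 a0F a0y).
have i1F : (i.-1 < size F)%N by rewrite (leq_ltn_trans (leq_pred i)).
have yi1 : nth 0 F i.-1 <= y.
  by rewrite leNgt (@before_find _ 0 (fun b => y < b)) // prednK.
exists (nth 0 F i.-1); first exact: mem_nth.
split=> //; last by apply: stepfun_nth; rewrite ?i0 ?yi1.
move=> b bF b_le_y; rewrite -(nth_index 0 bF).
apply: (sorted_leq_nth le_trans lexx 0 sFle); rewrite ?inE ?index_mem //.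
by rewrite -ltnS prednK // before.
Qed.

Lemma right_acc_closure x : right_acc S x -> closureR S x.
Proof.
move=> acc e e0; have [y Sy /andP[xy ye]] := acc e e0.
by exists y => //; rewrite distrC ger0_norm ?subr_ge0 ?ltW //; lra.
Qed.

Lemma image_f_ubound (A : set R) : A `<=` S -> has_ubound (f @` A).
Proof. by move=> AS; exists (f 0) => _ [y /AS Ay <-]; apply: f_decr; auto. Qed.

Definition sublevel c := [set y | S y /\ f y < c].

Definition cut c := inf (sublevel c).

Lemma sublevel_has_lbound c : has_lbound (sublevel c).
Proof. by exists 0 => y [/S_ge0]. Qed.

Lemma sublevel_has_inf c : 0 < c -> has_inf (sublevel c).
Proof.
move=> c0; split; last exact: sublevel_has_lbound.
by have [z Sz fz] := f_vanish c0; exists z; split; last exact: fz.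
Qed.

Lemma cut_le c y : sublevel c y -> cut c <= y.
Proof. exact/ge_inf/sublevel_has_lbound. Qed.

Lemma cut_ge0 c : 0 < c -> 0 <= cut c.
Proof. by case/sublevel_has_inf => ne _; apply: lb_le_inf => // y [/S_ge0]. Qed.

Lemma le_cut c x : 0 < c -> S x -> c < f x -> x <= cut c.
Proof.
case/sublevel_has_inf => ne _ Sx cx; apply: lb_le_inf => // y [Sy fy].
by rewrite leNgt; apply/negP => /ltW yx; have := f_decr Sy Sx yx; lra.
Qed.

Lemma cut_lower c y : S y -> y < cut c -> c <= f y.
Proof.
move=> Sy ys; rewrite leNgt; apply/negP => fy.
by have := cut_le (conj Sy fy); rewrite leNgt ys.
Qed.

Lemma cut_upper c y : 0 < c -> S y -> cut c < y -> f y < c.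
Proof.
move=> c0 Sy sy; have ys : 0 < y - cut c by rewrite subr_gt0.
have [t [St ft]] := inf_adherent ys (sublevel_has_inf c0).
by rewrite addrC subrK => /ltW ty; have := f_decr St Sy ty; lra.
Qed.

Lemma f_cut_le c : 0 < c -> S (cut c) -> f (cut c) <= c.
Proof.
move=> c0 Ss; apply/ler_addgt0Pr => e e0.
have [d d0 near_s] := f_rc Ss e0.
have [t [St ft] ts] := inf_adherent d0 (sublevel_has_inf c0).
have := near_s t St (cut_le (conj St ft)) ts.
by rewrite ltr_norml => /andP[]; lra.
Qed.

Lemma cut_right_acc c : 0 < c -> ~ S (cut c) -> right_acc S (cut c).
Proof.
move=> c0 nSs e e0; have [t [St ft] ts] := inf_adherent e0 (sublevel_has_inf c0).
exists t => //; rewrite ts andbT lt_neqAle cut_le //= andbT.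
by apply/eqP => st; apply: nSs; rewrite st.
Qed.

Lemma fbar_ge c s t : (forall y, S y -> y < s -> c <= f y) ->
  0 <= t -> t < s -> c <= fbar S f t.
Proof.
move=> below t0 ts; rewrite /fbar; have [St|nSt] := pselect (S t).
  by rewrite asboolT //; apply: below.
have t_neq0 : t <> 0 by move=> t_eq0; apply: nSt; rewrite t_eq0.
rewrite asboolF //; have [acc|nacc] := pselect (right_acc S t).
  have st : 0 < s - t by rewrite subr_gt0.
  have [z Sz /andP[tz]] := acc _ st.
  rewrite addrC subrK => zs; rewrite asboolT // /fplus.
  apply: le_trans (below z Sz zs) _; apply: ub_le_sup; last by exists z.
  by apply: image_f_ubound => w [].
rewrite asboolF // /fminus asboolF //; apply: lb_le_inf.
  have t_gt0 : 0 < t by rewrite lt_neqAle eq_sym t0 andbT; apply/eqP.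
  by exists (f 0), 0.
by move=> _ [z [Sz [_ zt]] <-]; apply: below => //; apply: lt_trans ts.
Qed.

Lemma fminus_fbar_ge c s : 0 < s -> (forall y, S y -> y < s -> c <= f y) ->
  c <= fminus (closureR S) (fbar S f) s.
Proof.
move=> s0 below; rewrite /fminus asboolF; last by move=> s_eq0; move: s0; rewrite s_eq0 ltxx.
apply: lb_le_inf; last by move=> _ [t [_ [t0 ts]] <-]; apply: fbar_ge below t0 ts.
exists (fbar S f 0), 0 => //; split; last by split.
by move=> e e0; exists 0; rewrite ?subrr ?normr0.
Qed.

Lemma fplus_cut_ge c : 0 < c -> ~ S (cut c) -> c <= fplus S f (cut c).
Proof.
move=> c0 nSs; have acc := cut_right_acc c0 nSs.
have s0 : 0 < cut c.
  by rewrite lt_neqAle cut_ge0 // andbT; apply/eqP => s_eq0; apply: nSs; rewrite -s_eq0.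
have := fminus_fbar_ge s0 (fun y Sy ys => cut_lower Sy ys).
rewrite leNgt => /negP lower; rewrite leNgt; apply/negP => upper; apply/nSs/DP_sub.
split; first exact: right_acc_closure.
split; first by move=> s_eq0; rewrite s_eq0 ltxx in s0.
by rewrite /fbar asboolF // asboolT //; apply: lt_le_trans upper _; rewrite leNgt; apply/negP.
Qed.

Lemma drop_point d x : 0 < d -> d < f x -> S x ->
  exists p, [/\ S p, x < p, f p <= f x - d &
    forall y, S y -> x <= y -> y < p -> f x <= f y + 2 * d].
Proof.
move=> d0 dx Sx; set c := f x - d; have c0 : 0 < c by rewrite subr_gt0.
have xs : x <= cut c by apply: le_cut; rewrite // /c; lra.
have [Ss|nSs] := pselect (S (cut c)).
  have fs := f_cut_le c0 Ss; exists (cut c); split=> //.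
    by rewrite lt_neqAle xs andbT; apply/eqP => xs_eq; move: fs; rewrite -xs_eq /c; lra.
  by move=> y Sy _ ys; have := cut_lower Sy ys; rewrite /c; lra.
have hE : has_sup (f @` [set y | S y /\ cut c < y]).
  split; last by apply: image_f_ubound => y [].
  have [t St /andP[st _]] := cut_right_acc c0 nSs ltr01.
  by exists (f t), t.
have [_ [p [Sp sp] <-] fp] := sup_adherent d0 hE.
have := fplus_cut_ge c0 nSs; rewrite /fplus => c_le_sup.
exists p; split=> //; first exact: le_lt_trans sp.
  by have := cut_upper c0 Sp sp; rewrite /c; lra.
move=> y Sy _ yp; have [ys|sy] := ltP y (cut c).
  by have := cut_lower Sy ys; rewrite /c; lra.
have {}sy : cut c < y.
  by rewrite lt_neqAle sy andbT; apply/eqP => s_eq; apply: nSs; rewrite s_eq.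
by have := f_decr Sy Sp (ltW yp); rewrite /c in c_le_sup; lra.
Qed.

(* Unlike a bound on the oscillation of f between consecutive points of G,
   this survives adding points to G. *)
Definition fine_from x eps (G : seq R) := exists2 m, m \in G & f m <= eps /\
  forall y, S y -> x <= y -> y < m -> exists2 a, a \in G & a <= y /\ f a <= f y + eps.

Lemma fine_from_subset x eps G G' :
  {subset G <= G'} -> fine_from x eps G -> fine_from x eps G'.
Proof.
move=> sGG' [m mG [fm close]]; exists m; first exact: sGG'.
split=> // y Sy xy ym; have [a aG ay] := close y Sy xy ym.
by exists a; first exact: sGG'.
Qed.

Lemma fine_from_last x eps : f x <= eps -> fine_from x eps [:: x].
Proof. by exists x; rewrite ?mem_seq1 //; split=> // y _ xy yx; lra. Qed.

Lemma fine_from_cons x p eps G : x < p ->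
    (forall y, S y -> x <= y -> y < p -> f x <= f y + eps) ->
  fine_from p eps G -> fine_from x eps (x :: G).
Proof.
move=> xp osc [m mG [fm close]]; exists m; first by rewrite inE mG orbT.
split=> // y Sy xy ym; have [yp|py] := ltP y p.
  by exists x; rewrite ?mem_head //; split; last exact: osc.
by have [a aG ay] := close y Sy py ym; exists a; rewrite // inE aG orbT.
Qed.

Lemma exists_fine_grid eps x : 0 < eps -> S x ->
  exists G, [/\ x \in G, (forall a, a \in G -> S a) & fine_from x eps G].
Proof.
move=> eps0 Sx; have d0 : 0 < eps / 2 by rewrite divr_gt0.
suff grid k : forall x, S x -> f x <= k%:R * (eps / 2) ->
    exists G, [/\ x \in G, (forall a, a \in G -> S a) & fine_from x eps G].
  apply: (grid (Num.truncn (f x / (eps / 2))).+1) => //.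
  by apply/ltW; rewrite -ltr_pdivrMr // truncnS_gt.
elim: k => [|k IH] y Sy fy; have [fy_le|fy_gt] := leP (f y) eps;
  try by exists [:: y]; split; [exact: mem_head | move=> a /[!inE]/eqP-> | exact: fine_from_last].
  by move: fy; rewrite mul0r; lra.
have [|p [Sp yp fp osc]] := drop_point d0 _ Sy; first by lra.
have [|G [pG GS fine]] := IH p Sp.
  by move: fy; rewrite -natr1 mulrDl mul1r; lra.
exists (y :: G); split; first exact: mem_head.
  by move=> a /[!inE] /orP[/eqP->|/GS].
apply: fine_from_cons yp _ fine => z Sz yz zp; have := osc z Sz yz zp; lra.
Qed.

Lemma stepfun_dist_le F eps y :
    sorted <%R F -> (forall a, a \in F -> S a) -> 0 \in F -> fine_from 0 eps F ->
  S y -> `|stepfun S f F y - f y| <= eps.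
Proof.
move=> sF FS F0 [m mF [fm close]] Sy.
have [hasF|/hasPn F_le_y] := boolP (has (fun b => y < b) F); last first.
  have {}F_le_y b : b \in F -> b <= y by move/F_le_y; rewrite -leNgt.
  rewrite stepfun_ge_all // sub0r normrN ger0_norm ?f_ge0 //.
  by have := f_decr (FS m mF) Sy (F_le_y m mF); lra.
have [a aF [ay a_max ->]] := stepfun_floor sF Sy F0 (S_ge0 Sy) hasF.
rewrite ger0_norm ?subr_ge0 ?(f_decr (FS a aF) Sy ay) //.
have [ym|my] := ltP y m.
  have [b bF [b_le_y fb]] := close y Sy (S_ge0 Sy) ym.
  by have := f_decr (FS b bF) (FS a aF) (a_max b bF b_le_y); lra.
by have := f_decr (FS m mF) (FS a aF) (a_max m mF my); have := f_ge0 Sy; lra.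
Qed.

Lemma supnormS_stepfun_le F eps :
    sorted <%R F -> (forall a, a \in F -> S a) -> 0 \in F -> fine_from 0 eps F ->
  supnormS S (fun y => stepfun S f F y - f y) <= eps.
Proof.
move=> sF FS F0 fine.
apply: ge_sup; first by exists `|stepfun S f F 0 - f 0|, 0.
by move=> _ [y Sy <-]; apply: stepfun_dist_le.
Qed.

End Approximation.

Theorem lemma2p6 (R : realType) (S : set R) (C : R) (f : R -> R) :
  (forall x, S x -> 0 <= x) -> S 0 -> 0 < C ->
  (forall x, S x -> 0 <= f x) ->
  right_cont S f -> decr_on S f -> DP S f `<=` S ->
  vanishes_at_infty S f ->
  exists F : nat -> seq R, forall n : nat,
    [/\ sorted <%R (F n), (forall x, x \in F n -> S x), 0 \in F n,
        {subset F n <= F n.+1} &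
        supnormS S (fun y => stepfun S f (F n) y - f y) < C / 2 ^+ n].
Proof.
move=> S_ge0 S0 C0 f_ge0 f_rc f_decr DP_sub f_vanish.
have eps_gt0 n : 0 < C / 2 ^+ n by rewrite divr_gt0 ?exprn_gt0.
have [G grid] := choice (fun n =>
  exists_fine_grid S_ge0 S0 f_rc f_decr DP_sub f_vanish (eps_gt0 n.+1) S0).
exists (sorted_union G) => n.
have sorted_n := sorted_union_sorted G n.
have in_S x : x \in sorted_union G n -> S x.
  by case/sorted_unionP=> k _; case: (grid k) => _ + _; apply.
have zero_in : 0 \in sorted_union G n by apply/sorted_unionP; exists n => //; case: (grid n).
have fine : fine_from S f 0 (C / 2 ^+ n.+1) (sorted_union G n).
  by case: (grid n) => _ _; apply: fine_from_subset => x xG; apply/sorted_unionP; exists n.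
split=> //.
  by move=> x /sorted_unionP[k kn xG]; apply/sorted_unionP; exists k => //; apply: leqW.
apply: le_lt_trans (supnormS_stepfun_le S_ge0 S0 f_ge0 f_decr sorted_n in_S zero_in fine) _.
by have := eps_gt0 n; rewrite exprS invfM mulrCA mulrC; lra.
Qed.
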